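(* Let $\rho\in\mathcal{D}(\mathcal{H})$ be a fixed density matrix. Then the function $\sigma\mapsto S(\rho\,\|\,\sigma)$ is $\lambda_{\max}(\rho)$-smooth and $\lambda_{\min}(\rho)$-strongly convex relative to the negative log determinant $\sigma\mapsto-\log\det(\sigma)$ on $\mathcal{D}(\mathcal{H})$.
   Context: $\mathcal{D}(\mathcal{H})$ is the set of positive semidefinite unit-trace Hermitian operators on $\mathcal{H}\cong\mathbb{C}^n$; $S(\rho\|\sigma)=\operatorname{tr}[\rho(\log\rho-\log\sigma)]$ is the quantum relative entropy. A function $g$ is $L$-smooth (resp. $\mu$-strongly convex) relative to $\varphi$ on $\mathcal{C}$ if $L\varphi-g$ (resp. $g-\mu\varphi$) is convex on the relative interior of $\mathcal{C}$ (here, the positive definite density matrices). *)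

From mathcomp Require Import all_boot all_order all_algebra.
From mathcomp Require Import complex.
From mathcomp Require Import reals exp.
Set Implicit Arguments.
Unset Strict Implicit.
Unset Printing Implicit Defensive.
Import Order.TTheory GRing.Theory Num.Theory.
Local Open Scope ring_scope.

Section QuantumDefs.
Variable R : realType.
Local Notation C := R[i].

Definition adjmx m n (A : 'M[C]_(m, n)) : 'M[C]_(n, m) := (map_mx Num.conj A)^T.

Definition hermitian n (A : 'M[C]_n) : Prop := adjmx A = A.

Definition psd n (A : 'M[C]_n) : Prop :=
  hermitian A /\ forall v : 'rV[C]_n, 0 <= (v *m A *m adjmx v) 0 0.

Definition posdef n (A : 'M[C]_n) : Prop :=
  hermitian A /\ forall v : 'rV[C]_n, v != 0 -> 0 < (v *m A *m adjmx v) 0 0.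

Definition density n (A : 'M[C]_n) : Prop := psd A /\ \tr A = 1.

(* relative interior of D(H): positive definite density matrices *)
Definition density_pd n (A : 'M[C]_n) : Prop := posdef A /\ \tr A = 1.

(* eigenvalues of a Hermitian matrix, via the spectral decomposition
   A = invmx U *m diag_mx d *m U of spectral.v (they are real) *)
Definition eigval n (A : 'M[C]_n) (i : 'I_n) : R :=
  complex.Re (spectral_diag A 0 i).

Definition lambda_max n (A : 'M[C]_n.+1) : R :=
  \big[Num.max/eigval A ord0]_(i < n.+1) eigval A i.

Definition lambda_min n (A : 'M[C]_n.+1) : R :=
  \big[Num.min/eigval A ord0]_(i < n.+1) eigval A i.

(* matrix logarithm through the spectral decomposition (functional calculus);
   with MathComp-Analysis' convention ln 0 = 0, i.e. 0 log 0 = 0 *)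
Definition logm n (A : 'M[C]_n) : 'M[C]_n :=
  invmx (spectralmx A) *m
  diag_mx (\row_i ((ln (eigval A i))%:C%C : C)) *m spectralmx A.

Definition qrel_entropy n (rho sigma : 'M[C]_n) : R :=
  complex.Re (\tr (rho *m (logm rho - logm sigma))).

Definition neglogdet n (sigma : 'M[C]_n) : R := - ln (complex.Re (\det sigma)).

Definition convex_on_pd n (f : 'M[C]_n -> R) : Prop :=
  forall (x y : 'M[C]_n) (t : R), density_pd x -> density_pd y ->
    0 <= t <= 1 ->
    f ((t%:C%C : C) *: x + ((1 - t)%:C%C : C) *: y) <= t * f x + (1 - t) * f y.

Definition rel_smooth n (L : R) (g phi : 'M[C]_n -> R) : Prop :=
  convex_on_pd (fun x => L * phi x - g x).

Definition rel_strongly_convex n (mu : R) (g phi : 'M[C]_n -> R) : Prop :=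
  convex_on_pd (fun x => g x - mu * phi x).

End QuantumDefs.

From Pilot Require Import Defs.
From mathcomp Require Import all_boot all_order all_algebra.
From mathcomp Require Import complex.
From mathcomp Require Import reals exp.
From mathcomp Require Import ring lra.

Set Implicit Arguments.
Unset Strict Implicit.
Unset Printing Implicit Defensive.

Import Order.TTheory GRing.Theory Num.Theory.
Local Open Scope ring_scope.

(* Let (lambda_k, u_k) be the eigenpairs of rho. Then
     S(rho || sigma) = tr (rho log rho) - sum_k lambda_k <u_k, log sigma u_k>,
     - log det sigma = - tr (log sigma) = - sum_k <u_k, log sigma u_k>,
   so lambda_max (- log det) - S and S - lambda_min (- log det) are constants
   minus nonnegative combinations of the maps sigma |-> <u, log sigma u>, and
   both claims reduce to the operator concavity of log.  The latter follows
   from log x = \int_0^oo ((1 + s)^-1 - (x + s)^-1) ds: every Riemann sum of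
   this integral is operator concave because the inverse is operator convex,
   and the sums converge at rate 1/k. *)

Section LogApproximation.
Variable R : realType.
Implicit Types a b c x : R.

Lemma lnB_le {a b} : 0 < a -> 0 < b -> ln b - ln a <= b / a - 1.
Proof.
move=> a0 b0; rewrite -ln_div ?posrE //.
have := @le_ln1Dx _ (b / a - 1); rewrite [1 + _]addrC subrK; apply.
by rewrite ltrBrDl subrr divr_gt0.
Qed.

Lemma ln_lipschitz {a b c} : 0 < c -> c <= a -> c <= b ->
  `|ln b - ln a| <= `|b - a| / c.
Proof.
move=> c0 ca cb; have a0 := lt_le_trans c0 ca; have b0 := lt_le_trans c0 cb.
have bound (d e : R) : 0 < d -> c <= d -> 0 < e -> ln e - ln d <= `|e - d| / c.
  move=> d0 cd e0; apply: le_trans (lnB_le d0 e0) _.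
  have -> : e / d - 1 = (e - d) / d by field; rewrite gt_eqF.
  apply: le_trans (ler_norm _) _.
  rewrite normrM [`|d^-1|]gtr0_norm ?invr_gt0 //.
  by apply: ler_wpM2l; rewrite ?normr_ge0 // lef_pV2 ?posrE.
rewrite ler_norml bound // andbT lerNl opprB distrC; exact: bound.
Qed.

(* The left Riemann sum of [\int_a^(a + N) dx / x] minus the integral. *)
Definition harmonic_defect a N :=
  \sum_(j < N) (a + j%:R)^-1 - (ln (a + N%:R) - ln a).

Lemma harmonic_defect_bounds {a} N : 0 < a ->
  0 <= harmonic_defect a N <= a^-1 - (a + N%:R)^-1.
Proof.
move=> a0; elim: N => [|N IH].
  by rewrite /harmonic_defect big_ord0 addr0 !subrr lexx.
set b := a + N%:R; have b0 : 0 < b by rewrite ltr_wpDr ?ler0n.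
have b1 : 0 < b + 1 by rewrite ltr_wpDr.
have -> : harmonic_defect a N.+1 =
    harmonic_defect a N + b^-1 - (ln (b + 1) - ln b).
  by rewrite /harmonic_defect big_ord_recr /= -natr1 addrA -/b; ring.
rewrite -natr1 addrA -/b.
have up : ln (b + 1) - ln b <= b^-1.
  have -> : b^-1 = (b + 1) / b - 1 by field; rewrite gt_eqF.
  exact: lnB_le.
have low : ln b - ln (b + 1) <= - (b + 1)^-1.
  have -> : - (b + 1)^-1 = b / (b + 1) - 1 by field; rewrite gt_eqF.
  exact: lnB_le.
move: IH => /andP[IH1 IH2]; apply/andP; split; lra.
Qed.

(* A Riemann sum of [ln x = \int_0^oo (1 / (1 + s) - 1 / (x + s)) ds] with
   step [1 / k] on [0, k]. *)
Definition ln_riemann (k : nat) x :=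
  \sum_(j < k * k) ((k%:R + j%:R)^-1 - (k%:R * x + j%:R)^-1).

Lemma ln_riemann_approx k x : 0 < x -> (0 < k)%N ->
  `|ln_riemann k x - ln x| <= (1 + x^-1 + `|1 - x|) / k%:R.
Proof.
move=> x0 k0; have k0' : 0 < k%:R :> R by rewrite ltr0n.
have kx0 : 0 < k%:R * x by rewrite mulr_gt0.
set N := (k * k)%N; have N0 : 0 < N%:R :> R by rewrite ltr0n muln_gt0 k0.
have -> : ln_riemann k x - ln x = harmonic_defect k%:R N
    - harmonic_defect (k%:R * x) N + (ln (k%:R + N%:R) - ln (k%:R * x + N%:R)).
  by rewrite /ln_riemann /harmonic_defect sumrB lnM ?posrE //; ring.
have /andP[d1 d2] := harmonic_defect_bounds N k0'.
have /andP[d3 d4] := harmonic_defect_bounds N kx0.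
have lnN : `|ln (k%:R + N%:R) - ln (k%:R * x + N%:R)| <= `|1 - x| / k%:R.
  have NE : N%:R = k%:R * k%:R :> R by rewrite natrM.
  have ca : N%:R <= k%:R * x + N%:R by rewrite lerDr ltW.
  have cb : N%:R <= k%:R + N%:R :> R by rewrite lerDr ler0n.
  apply: le_trans (ln_lipschitz N0 ca cb) _.
  have -> : k%:R + N%:R - (k%:R * x + N%:R) = k%:R * (1 - x) by ring.
  rewrite normrM gtr0_norm // NE le_eqVlt; apply/orP; left; apply/eqP.
  by field; rewrite gt_eqF.
have i1 : 0 <= (k%:R + N%:R :> R)^-1 by rewrite invr_ge0 addr_ge0 ?ler0n.
have i2 : 0 <= (k%:R * x + N%:R)^-1 by rewrite invr_ge0 addr_ge0 ?ltW.
rewrite invfM [k%:R^-1 * _]mulrC in d4.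
rewrite !mulrDl mul1r; move: lnN; rewrite ler_norml => /andP[l1 l2].
rewrite ler_norml; apply/andP; split; lra.
Qed.

End LogApproximation.

Section Approximation.
Variable R : archiRealFieldType.

Lemma ler_of_le_addn (a b E : R) :
  (forall k, (0 < k)%N -> a <= b + E / k%:R) -> a <= b.
Proof.
move=> abE; apply/ler_addgt0Pr => e e0.
set k := (Num.bound (E / e)).+1; have k0 : 0 < k%:R :> R by rewrite ltr0n.
apply: le_trans (abE k isT) _; rewrite lerD2l.
have [E0|E0] := lerP E 0.
  by apply: le_trans (ltW e0); rewrite pmulr_lle0 ?invr_gt0.
have Ee0 : 0 <= E / e by rewrite divr_ge0 ?ltW.
rewrite ler_pdivrMr // [e * _]mulrC -ler_pdivrMr //; apply/ltW.
by rewrite (lt_le_trans (archi_boundP Ee0)) // ler_nat.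
Qed.

Lemma convex_comb_le_of_approx (t fx fy fz ex ey ez : R) (gx gy gz : nat -> R) :
  0 <= t <= 1 ->
  (forall k, (0 < k)%N -> t * gx k + (1 - t) * gy k <= gz k) ->
  (forall k, (0 < k)%N -> `|gx k - fx| <= ex / k%:R) ->
  (forall k, (0 < k)%N -> `|gy k - fy| <= ey / k%:R) ->
  (forall k, (0 < k)%N -> `|gz k - fz| <= ez / k%:R) ->
  t * fx + (1 - t) * fy <= fz.
Proof.
move=> /andP[t0 t1] conc ax ay az.
apply: (ler_of_le_addn (E := ex + ey + ez)) => k k0.
have := ax k k0; have := ay k k0; have := az k k0; have := conc k k0.
rewrite !mulrDl !ler_norml.
move: (ex / _) (ey / _) (ez / _) (gx k) (gy k) (gz k).
move=> a b c u w z uwz /andP[zl zu] /andP[yl yu] /andP[xl xu].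
have t1' : 0 <= 1 - t by rewrite subr_ge0.
have hx : t * (fx - u) <= a.
  by apply: le_trans (ler_piMl _ t1); [apply: ler_wpM2l; lra | lra].
have hy : (1 - t) * (fy - w) <= b.
  apply: le_trans (ler_piMl _ _); [apply: ler_wpM2l; lra | lra |].
  by rewrite lerBlDr lerDl.
lra.
Qed.

End Approximation.

Local Open Scope complex_scope.

Section Adjoint.
Variable R : realType.
Local Notation C := R[i].
Local Open Scope sesquilinear_scope.

Lemma adjmxE m p (A : 'M[C]_(m, p)) : adjmx A = A ^t*.
Proof. by rewrite /adjmx map_trmx. Qed.

Lemma adjmxK m p (A : 'M[C]_(m, p)) : adjmx (adjmx A) = A.
Proof. by rewrite !adjmxE trmxCK. Qed.

Lemma adjmxM m p q (A : 'M[C]_(m, p)) (B : 'M[C]_(p, q)) :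
  adjmx (A *m B) = adjmx B *m adjmx A.
Proof. by rewrite /adjmx map_mxM trmx_mul. Qed.

Lemma adjmxD m p (A B : 'M[C]_(m, p)) : adjmx (A + B) = adjmx A + adjmx B.
Proof. by rewrite /adjmx map_mxD linearD. Qed.

Lemma adjmxN m p (A : 'M[C]_(m, p)) : adjmx (- A) = - adjmx A.
Proof. by rewrite /adjmx map_mxN linearN. Qed.

Lemma adjmxZ m p (r : R) (A : 'M[C]_(m, p)) :
  adjmx (r%:C *: A) = r%:C *: adjmx A.
Proof.
apply/matrixP => i j; rewrite /adjmx !mxE rmorphM /=; congr (_ * _).
by apply/eqP; rewrite eq_complex /= oppr0 !eqxx.
Qed.

Lemma adjmxV p (A : 'M[C]_p) : adjmx (invmx A) = invmx (adjmx A).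
Proof. by rewrite /adjmx map_invmx trmx_inv. Qed.

Lemma adjmx1 p : adjmx (1%:M : 'M[C]_p) = 1%:M.
Proof. by rewrite /adjmx map_mx1 trmx1. Qed.

Lemma ReD (x y : C) : complex.Re (x + y) = complex.Re x + complex.Re y.
Proof. by case: x; case: y. Qed.

Lemma ReN (x : C) : complex.Re (- x) = - complex.Re x.
Proof. by case: x. Qed.

Lemma Re_realM (r : R) (x : C) : complex.Re (r%:C * x) = r * complex.Re x.
Proof. by case: x => a b /=; rewrite mul0r subr0. Qed.

Lemma Re_conj (x : C) : complex.Re (Num.conj x) = complex.Re x.
Proof. by case: x. Qed.

End Adjoint.

Section QuadraticForm.
Variables (R : realType) (n : nat).
Local Notation C := R[i].
Implicit Types (A X Y : 'M[C]_n) (v w : 'rV[C]_n).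

Definition qform A v : R := complex.Re ((v *m A *m adjmx v) 0 0).

Lemma qformD A B v : qform (A + B) v = qform A v + qform B v.
Proof. by rewrite /qform mulmxDr mulmxDl mxE raddfD. Qed.

Lemma qformN A v : qform (- A) v = - qform A v.
Proof. by rewrite /qform mulmxN mulNmx mxE raddfN. Qed.

Lemma qformB A B v : qform (A - B) v = qform A v - qform B v.
Proof. by rewrite qformD qformN. Qed.

Lemma qformZ (r : R) A v : qform (r%:C *: A) v = r * qform A v.
Proof. by rewrite /qform -scalemxAr -scalemxAl mxE Re_realM. Qed.

Lemma qformBr A v w : qform A (v - w) =
  qform A v - complex.Re ((v *m A *m adjmx w) 0 0)
  - complex.Re ((w *m A *m adjmx v) 0 0) + qform A w.
Proof.
have addE (M N : 'M[C]_1) : (M + N) 0 0 = M 0 0 + N 0 0 by rewrite mxE.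
have oppE (M : 'M[C]_1) : (- M) 0 0 = - M 0 0 by rewrite mxE.
rewrite /qform adjmxD adjmxN mulmxBl mulmxBr !mulmxBl !addE !oppE addE oppE.
rewrite !ReD !ReN ReD ReN.
have reorder (a b c d : R) : a - b - (c - d) = a - c - b + d by ring.
exact: reorder.
Qed.

Lemma qform_sum (I : Type) (s : seq I) (F : I -> 'M[C]_n) v :
  qform (\sum_(i <- s) F i) v = \sum_(i <- s) qform (F i) v.
Proof.
apply: (big_morph (qform^~ v) (fun A B => qformD A B v)).
by rewrite /qform mulmx0 mul0mx mxE.
Qed.

Lemma psd_qform_ge0 {A} : psd A -> forall v, 0 <= qform A v.
Proof. by case=> _ Apos v; move: (Apos v); rewrite lecE => /andP[]. Qed.

Lemma posdef_qform_gt0 {A} : posdef A -> forall v, v != 0 -> 0 < qform A v.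
Proof. by case=> _ Apos v /Apos; rewrite ltcE => /andP[]. Qed.

Lemma posdef_psd {A} : posdef A -> psd A.
Proof.
case=> hA pA; split=> // v; have [->|v0] := eqVneq v 0; last exact/ltW/pA.
by rewrite !mul0mx mxE.
Qed.

Lemma posdef_unit {A} : posdef A -> A \in unitmx.
Proof.
move=> [_ pA]; rewrite -row_free_unit; apply: inj_row_free => v vA0.
by apply/eqP; apply: contraT => /pA; rewrite vA0 mul0mx mxE ltxx.
Qed.

Lemma psd1 : psd (1%:M : 'M[C]_n).
Proof.
split=> [|v]; first exact: adjmx1.
rewrite mulmx1 mxE; apply: sumr_ge0 => i _; rewrite /adjmx !mxE.
exact: mul_conjC_ge0.
Qed.

Lemma posdef_combination (a b : R) A B : 0 < a -> 0 <= b -> posdef A -> psd B ->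
  posdef (a%:C *: A + b%:C *: B).
Proof.
move=> a0 b0 [hA pA] [hB pB]; split=> [|v v0].
  by rewrite /Defs.hermitian adjmxD !adjmxZ hA hB.
have scaleE (c : C) (M : 'M[C]_1) : (c *: M) 0 0 = c * M 0 0 by rewrite mxE.
rewrite mulmxDr mulmxDl -!scalemxAr -!scalemxAl mxE !scaleE.
by rewrite ltr_pwDl ?mulr_ge0 ?mulr_gt0 ?pA ?pB ?ler0c ?ltcR.
Qed.

Lemma posdef_convex {A B} {t : R} : posdef A -> posdef B -> 0 <= t <= 1 ->
  posdef (t%:C *: A + (1 - t)%:C *: B).
Proof.
move=> pA pB /andP[t0 t1]; have [tpos|tnpos] := ltP 0 t.
  by apply: posdef_combination; rewrite ?subr_ge0 //; apply: posdef_psd.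
have -> : t = 0 by apply/le_anti/andP.
rewrite addrC subr0; apply: posdef_combination; rewrite ?ltr01 //.
exact: posdef_psd.
Qed.

(* Equality holds at [w = v *m invmx X], so [qform (invmx X) v] is a
   supremum of affine functions of [X]: the inverse is operator convex. *)
Lemma qform_invmx_ge {X} v w : posdef X ->
  2 * complex.Re ((w *m adjmx v) 0 0) - qform X w <= qform (invmx X) v.
Proof.
move=> pX; have [hX _] := pX; have uX := posdef_unit pX.
set y := v *m invmx X.
have yX : y *m X = v by rewrite mulmxKV.
have Xy : X *m adjmx y = adjmx v.
  by rewrite adjmxM adjmxV hX mulmxA mulmxV ?mul1mx.
have qy : qform X y = qform (invmx X) v.
  by rewrite /qform yX adjmxM adjmxV hX mulmxA.
have wv : complex.Re ((v *m adjmx w) 0 0) = complex.Re ((w *m adjmx v) 0 0).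
  by rewrite -[in LHS](adjmxK v) -adjmxM /adjmx !mxE Re_conj.
have := psd_qform_ge0 (posdef_psd pX) (w - y).
rewrite qformBr -[w *m X *m _]mulmxA Xy yX qy wv.
have rearrange (a b r : R) : 0 <= a - r - r + b -> 2 * r - a <= b by lra.
exact: rearrange.
Qed.

Lemma qform_invmx_convex X Y (t : R) v : posdef X -> posdef Y -> 0 <= t <= 1 ->
  qform (invmx (t%:C *: X + (1 - t)%:C *: Y)) v <=
  t * qform (invmx X) v + (1 - t) * qform (invmx Y) v.
Proof.
move=> pX pY t01; set Z := _ + _; have pZ : posdef Z := posdef_convex pX pY t01.
have [hZ _] := pZ; set y := v *m invmx Z.
have qZy : qform Z y = qform (invmx Z) v.
  by rewrite /qform /y mulmxKV ?posdef_unit // adjmxM adjmxV hZ mulmxA.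
have lin : qform Z y = t * qform X y + (1 - t) * qform Y y.
  by rewrite qformD !qformZ.
have hx := qform_invmx_ge v y pX; have hy := qform_invmx_ge v y pY.
rewrite -/(qform (invmx Z) v) -qZy in hx hy *.
move: t01 => /andP[t0 t1]; have t1' : 0 <= 1 - t by rewrite subr_ge0.
have average (a b q iX iY : R) : q = t * a + (1 - t) * b ->
    2 * q - a <= iX -> 2 * q - b <= iY -> q <= t * iX + (1 - t) * iY.
  move=> -> hX hY; apply: le_trans (lerD (ler_wpM2l t0 hX) (ler_wpM2l t1' hY)).
  by rewrite le_eqVlt; apply/orP; left; apply/eqP; ring.
exact: average lin hx hy.
Qed.

End QuadraticForm.

Section SpectralCalculus.
Variables (R : realType) (n : nat) (A : 'M[R[i]]_n).
Local Notation C := R[i].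
Local Notation U := (spectralmx A).
Implicit Types (r s : 'I_n -> R) (v : 'rV[C]_n) (M : 'M[C]_n).

Lemma spectralmx_mul_adj : U *m adjmx U = 1%:M.
Proof. by rewrite adjmxE; apply/unitarymxP/spectral_unitarymx. Qed.

Lemma invmx_spectralmx : invmx U = adjmx U.
Proof. by rewrite adjmxE invmx_unitary // spectral_unitarymx. Qed.

Lemma spectralmx_adj_mul : adjmx U *m U = 1%:M.
Proof. by rewrite -invmx_spectralmx mulVmx // spectral_unit. Qed.

(* The matrix with the eigenvectors of [A] and the spectrum [r]; it is [f(A)]
   when [r = f \o eigval A] and [A] is Hermitian. *)
Definition spectral_mx r : 'M[C]_n := adjmx U *m diag_mx (\row_i (r i)%:C) *m U.

Lemma eq_spectral_mx r s : r =1 s -> spectral_mx r = spectral_mx s.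
Proof.
by move=> rs; congr (_ *m diag_mx _ *m _); apply/rowP => i; rewrite !mxE rs.
Qed.

Lemma hermitian_spectral : Defs.hermitian A -> A = spectral_mx (eigval A).
Proof.
move=> hA; have /orthomx_spectralP {1}-> : A \is normalmx.
  by apply/normalmxP; rewrite -adjmxE hA.
rewrite /spectral_mx invmx_spectralmx; congr (_ *m diag_mx _ *m _).
have /mxOverP/(_ 0) realA : spectral_diag A \is a realmx.
  apply/hermitian_spectral_diag_real/is_hermitianmxP.
  by rewrite expr0 scale1r -adjmxE hA.
by apply/rowP => i; rewrite mxE /eigval RRe_real ?realA.
Qed.

Lemma logmE : logm A = spectral_mx (fun i => ln (eigval A i)).
Proof. by rewrite /logm invmx_spectralmx. Qed.

Lemma spectral_mx_const (c : R) : spectral_mx (fun=> c) = c%:C%:M.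
Proof.
rewrite /spectral_mx.
have -> : \row_i c%:C = const_mx c%:C :> 'rV[C]_n.
  by apply/rowP => i; rewrite !mxE.
by rewrite diag_const_mx scalar_mxC -mulmxA spectralmx_adj_mul mulmx1.
Qed.

Lemma spectral_mxD r s :
  spectral_mx (fun i => r i + s i) = spectral_mx r + spectral_mx s.
Proof.
rewrite /spectral_mx -mulmxDl -mulmxDr -raddfD /=; congr (_ *m diag_mx _ *m _).
by apply/rowP => i; rewrite !mxE rmorphD.
Qed.

Lemma spectral_mxB r s :
  spectral_mx (fun i => r i - s i) = spectral_mx r - spectral_mx s.
Proof.
rewrite /spectral_mx -mulmxBl -mulmxBr -raddfB /=; congr (_ *m diag_mx _ *m _).
by apply/rowP => i; rewrite !mxE rmorphB.
Qed.

Lemma spectral_mxZ (a : R) r :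
  spectral_mx (fun i => a * r i) = a%:C *: spectral_mx r.
Proof.
rewrite /spectral_mx scalemxAl scalemxAr -linearZ /=.
congr (_ *m diag_mx _ *m _).
by apply/rowP => i; rewrite !mxE rmorphM.
Qed.

Lemma spectral_mx_sum (J : Type) (l : seq J) (F : J -> 'I_n -> R) :
  \sum_(j <- l) spectral_mx (F j) = spectral_mx (fun i => \sum_(j <- l) F j i).
Proof.
elim: l => [|j l IH].
  rewrite big_nil (@eq_spectral_mx _ (fun=> 0)) => [|i]; last first.
    by rewrite big_nil.
  by rewrite spectral_mx_const; apply/matrixP => i j; rewrite !mxE mul0rn.
rewrite big_cons IH -spectral_mxD.
by apply: eq_spectral_mx => i; rewrite big_cons.
Qed.

Lemma spectral_mxM r s :
  spectral_mx r *m spectral_mx s = spectral_mx (fun i => r i * s i).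
Proof.
rewrite /spectral_mx !mulmxA -[_ *m U *m adjmx U]mulmxA.
rewrite spectralmx_mul_adj mulmx1.
rewrite -[_ *m diag_mx _ *m diag_mx _]mulmxA mulmx_diag.
by congr (_ *m diag_mx _ *m _); apply/rowP => i; rewrite !mxE rmorphM.
Qed.

Lemma spectral_mxV r : (forall i, r i != 0) ->
  invmx (spectral_mx r) = spectral_mx (fun i => (r i)^-1).
Proof.
move=> r0; have E : spectral_mx r *m spectral_mx (fun i => (r i)^-1) = 1%:M.
  rewrite spectral_mxM (@eq_spectral_mx _ (fun=> 1)) => [|i]; last exact: mulfV.
  by rewrite spectral_mx_const rmorph1.
by have [rU _] := mulmx1_unit E; rewrite -[LHS]mulmx1 -E mulKmx.
Qed.

Lemma row_spectral_mx r k : row k U *m spectral_mx r = (r k)%:C *: row k U.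
Proof.
rewrite /spectral_mx !mulmxA -row_mul spectralmx_mul_adj.
rewrite -[row k 1%:M *m _]row_mul.
by rewrite mul1mx row_diag_mx mxE -scalemxAl -rowE.
Qed.

Lemma mxtrace_spectral r : \tr (spectral_mx r) = \sum_i (r i)%:C.
Proof.
rewrite /spectral_mx mxtrace_mulC mulmxA spectralmx_mul_adj mul1mx mxtrace_diag.
by apply: eq_bigr => i _; rewrite mxE.
Qed.

Lemma mxtrace_spectral_basis M :
  \tr M = \sum_k (row k U *m M *m adjmx (row k U)) 0 0.
Proof.
have -> : \tr M = \tr (U *m M *m adjmx U).
  by rewrite mxtrace_mulC mulmxA spectralmx_adj_mul mul1mx.
apply: eq_bigr => k _; rewrite [LHS]mxE [RHS]mxE; apply: eq_bigr => j _.
by rewrite -row_mul /adjmx !mxE.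
Qed.

Lemma Re_mxtrace_spectral_mul r M :
  complex.Re (\tr (spectral_mx r *m M)) = \sum_k r k * qform M (row k U).
Proof.
rewrite mxtrace_spectral_basis raddf_sum /=; apply: eq_bigr => k _.
by rewrite mulmxA row_spectral_mx -!scalemxAl mxE Re_realM.
Qed.

Definition eigweight v i : R :=
  complex.Re ((v *m adjmx U) 0 i * Num.conj ((v *m adjmx U) 0 i)).

Lemma eigweight_ge0 v i : 0 <= eigweight v i.
Proof.
by have := mul_conjC_ge0 ((v *m adjmx U) 0 i); rewrite lecE => /andP[].
Qed.

Lemma qform_spectral r v : qform (spectral_mx r) v = \sum_i r i * eigweight v i.
Proof.
have E : U *m adjmx v = adjmx (v *m adjmx U) by rewrite adjmxM adjmxK.
rewrite /qform /spectral_mx !mulmxA -[_ *m U *m adjmx v]mulmxA E /eigweight.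
move: (v *m adjmx U) => w; rewrite mul_mx_diag mxE raddf_sum /=.
by apply: eq_bigr => i _; rewrite /adjmx !mxE mulrAC mulrC Re_realM.
Qed.

Lemma eigweight_row k i : eigweight (row k U) i = (i == k)%:R.
Proof.
rewrite /eigweight -row_mul spectralmx_mul_adj !mxE eq_sym.
by case: (i == k); rewrite ?mulr1n ?mulr0n ?conjC1 ?conjC0 ?mulr1 ?mulr0.
Qed.

Lemma qform_spectral_row r k : qform (spectral_mx r) (row k U) = r k.
Proof.
rewrite qform_spectral (bigD1 k) //= eigweight_row eqxx mulr1 big1 ?addr0 //.
by move=> i /negbTE ik; rewrite eigweight_row ik mulr0.
Qed.

End SpectralCalculus.

Section LogConcavity.
Variables (R : realType) (n : nat).
Local Notation C := R[i].
Implicit Types (X Y : 'M[C]_n) (v : 'rV[C]_n).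

Lemma posdef_eigval_gt0 X : posdef X -> forall i, 0 < eigval X i.
Proof.
move=> pX k; have [hX _] := pX.
rewrite -(qform_spectral_row X (eigval X) k) -hermitian_spectral //.
apply: (posdef_qform_gt0 pX).
have : eigweight X (row k (spectralmx X)) k != 0.
  by rewrite eigweight_row eqxx oner_neq0.
by apply: contraNneq => ->; rewrite /eigweight mul0mx mxE mul0r.
Qed.

Lemma resolvent_spectral X (k j : nat) : Defs.hermitian X ->
  k%:R *: X + j%:R%:M = spectral_mx X (fun i => k%:R * eigval X i + j%:R).
Proof.
move=> hX; rewrite (spectral_mxD X (fun i => k%:R * eigval X i) (fun=> j%:R)).
by rewrite spectral_mxZ spectral_mx_const !rmorph_nat -hermitian_spectral.
Qed.

Lemma posdef_resolvent X (k j : nat) : posdef X -> (0 < k)%N ->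
  posdef (k%:R *: X + j%:R%:M).
Proof.
move=> pX k0; rewrite -(rmorph_nat (real_complex R) k).
rewrite -(rmorph_nat (real_complex R) j) -scalemx1.
by apply: posdef_combination; rewrite ?ltr0n ?ler0n //; apply: psd1.
Qed.

(* The matrix version of [ln_riemann]: a Riemann sum of
   [log X = \int_0^oo ((1 + s)^-1 - (X + s)^-1) ds]. *)
Definition logm_riemann (k : nat) X : 'M[C]_n :=
  \sum_(j < k * k) ((k%:R + j%:R)^-1%:M - invmx (k%:R *: X + j%:R%:M)).

Lemma logm_riemannE X k : posdef X -> (0 < k)%N ->
  logm_riemann k X = spectral_mx X (fun i => ln_riemann k (eigval X i)).
Proof.
move=> pX k0; have [hX _] := pX; have lam0 := posdef_eigval_gt0 pX.
rewrite /logm_riemann /ln_riemann -spectral_mx_sum; apply: eq_bigr => j _.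
rewrite spectral_mxB spectral_mx_const resolvent_spectral //.
rewrite spectral_mxV => [|i].
  by rewrite fmorphV rmorphD !rmorph_nat.
by rewrite gt_eqF // ltr_wpDr ?ler0n ?mulr_gt0 ?ltr0n.
Qed.

Lemma qform_logm_riemann_approx X v : posdef X -> forall k, (0 < k)%N ->
  `|qform (logm_riemann k X) v - qform (logm X) v| <=
  (\sum_i eigweight X v i * (1 + (eigval X i)^-1 + `|1 - eigval X i|)) / k%:R.
Proof.
move=> pX k k0; rewrite logm_riemannE // logmE !qform_spectral -sumrB.
rewrite mulr_suml; apply: le_trans (ler_norm_sum _ _ _) _.
apply: ler_sum => i _; rewrite -mulrBl normrM.
rewrite [`|eigweight _ _ _|]ger0_norm ?eigweight_ge0 //.
rewrite mulrC -mulrA ler_wpM2l ?eigweight_ge0 //.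
exact: ln_riemann_approx (posdef_eigval_gt0 pX i) k0.
Qed.

Lemma qform_logm_riemann_concave X Y t v :
  posdef X -> posdef Y -> 0 <= t <= 1 -> forall k, (0 < k)%N ->
  t * qform (logm_riemann k X) v + (1 - t) * qform (logm_riemann k Y) v <=
  qform (logm_riemann k (t%:C *: X + (1 - t)%:C *: Y)) v.
Proof.
move=> pX pY t01 k k0.
rewrite /logm_riemann !qform_sum !mulr_sumr -big_split /=.
apply: ler_sum => j _.
have -> : k%:R *: (t%:C *: X + (1 - t)%:C *: Y) + j%:R%:M =
    t%:C *: (k%:R *: X + j%:R%:M) + (1 - t)%:C *: (k%:R *: Y + j%:R%:M).
  by apply/matrixP => a b; rewrite !mxE rmorphB rmorph1; ring.
have := qform_invmx_convex v (posdef_resolvent j pX k0)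
  (posdef_resolvent j pY k0) t01.
rewrite !qformB.
have key (z a b d : R) : z <= t * a + (1 - t) * b ->
    t * (d - a) + (1 - t) * (d - b) <= d - z.
  have -> : t * (d - a) + (1 - t) * (d - b) = d - (t * a + (1 - t) * b) by ring.
  exact: lerB.
exact: key.
Qed.

Lemma qform_logm_concave X Y t v : posdef X -> posdef Y -> 0 <= t <= 1 ->
  t * qform (logm X) v + (1 - t) * qform (logm Y) v <=
  qform (logm (t%:C *: X + (1 - t)%:C *: Y)) v.
Proof.
move=> pX pY t01; have pZ := posdef_convex pX pY t01.
exact: (convex_comb_le_of_approx t01 (qform_logm_riemann_concave v pX pY t01)
  (qform_logm_riemann_approx v pX) (qform_logm_riemann_approx v pY)
  (qform_logm_riemann_approx v pZ)).
Qed.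

End LogConcavity.

Lemma ln_prod (R : realType) (I : Type) (r : seq I) (F : I -> R) :
  (forall i, 0 < F i) -> ln (\prod_(i <- r) F i) = \sum_(i <- r) ln (F i).
Proof.
move=> F0; elim: r => [|i r IH]; first by rewrite !big_nil ln1.
by rewrite !big_cons lnM ?IH // posrE ?F0 // prodr_gt0.
Qed.

Section RelativeEntropy.
Variables (R : realType) (n : nat).
Local Notation C := R[i].
Implicit Types (A X : 'M[C]_n).

Lemma ln_det_logm X :
  posdef X -> ln (complex.Re (\det X)) = complex.Re (\tr (logm X)).
Proof.
move=> pX; have [hX _] := pX.
have -> : complex.Re (\tr (logm X)) = \sum_i ln (eigval X i).
  by rewrite logmE mxtrace_spectral raddf_sum.
have -> : \det X = \det (spectral_mx X (eigval X)).
  by rewrite -hermitian_spectral.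
rewrite /spectral_mx !det_mulmx mulrAC -det_mulmx spectralmx_adj_mul det1 mul1r.
rewrite det_diag.
under eq_bigr do rewrite mxE.
by rewrite -rmorph_prod ln_prod //; exact: posdef_eigval_gt0.
Qed.

Lemma Re_mxtrace_qform A X :
  complex.Re (\tr X) = \sum_k qform X (row k (spectralmx A)).
Proof. by rewrite (mxtrace_spectral_basis A) raddf_sum. Qed.

Lemma qrel_entropyE rho X : Defs.hermitian rho ->
  qrel_entropy rho X = complex.Re (\tr (rho *m logm rho))
    - \sum_k eigval rho k * qform (logm X) (row k (spectralmx rho)).
Proof.
move=> hr; rewrite /qrel_entropy mulmxBr linearB raddfB /=.
by rewrite -Re_mxtrace_spectral_mul -hermitian_spectral.
Qed.

Lemma neglogdetE A X : posdef X ->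
  neglogdet X = - \sum_k qform (logm X) (row k (spectralmx A)).
Proof.
by move=> pX; rewrite /neglogdet ln_det_logm // (Re_mxtrace_qform A).
Qed.

Lemma convex_on_pd_sub_qform_logm (f : 'M[C]_n -> R) (c : R) (a : 'I_n -> R)
    (u : 'I_n -> 'rV[C]_n) :
  (forall k, 0 <= a k) ->
  (forall X, posdef X -> f X = c - \sum_k a k * qform (logm X) (u k)) ->
  convex_on_pd f.
Proof.
move=> a0 fE X Y t [pX _] [pY _] t01; have pZ := posdef_convex pX pY t01.
have concave : t * \sum_k a k * qform (logm X) (u k)
    + (1 - t) * \sum_k a k * qform (logm Y) (u k)
    <= \sum_k a k * qform (logm (t%:C *: X + (1 - t)%:C *: Y)) (u k).
  rewrite !mulr_sumr -big_split; apply: ler_sum => k _ /=.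
  rewrite mulrCA [(1 - t) * _]mulrCA -mulrDr ler_wpM2l //.
  exact: qform_logm_concave.
have combine (sx sy sz : R) : t * sx + (1 - t) * sy <= sz ->
    c - sz <= t * (c - sx) + (1 - t) * (c - sy).
  have -> : t * (c - sx) + (1 - t) * (c - sy) = c - (t * sx + (1 - t) * sy).
    by ring.
  exact: lerB.
by rewrite !fE //; exact: combine concave.
Qed.

End RelativeEntropy.

Theorem mainTheorem10 (R : realType) (n : nat) (rho : 'M[R[i]]_n.+1) :
  density rho ->
  rel_smooth (lambda_max rho) (qrel_entropy rho) (@neglogdet R n.+1) /\
  rel_strongly_convex (lambda_min rho) (qrel_entropy rho) (@neglogdet R n.+1).
Proof.
move=> [[hr _] _]; set u := fun k => row k (spectralmx rho).
set c := complex.Re (\tr (rho *m logm rho)).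
have entropyE X :
    qrel_entropy rho X = c - \sum_k eigval rho k * qform (logm X) (u k).
  exact: qrel_entropyE.
split.
- apply: (@convex_on_pd_sub_qform_logm _ _ _ (- c)
    (fun k => lambda_max rho - eigval rho k) u).
    by move=> k; rewrite subr_ge0; apply: le_bigmax.
  move=> X pX; rewrite entropyE (neglogdetE rho pX).
  under [in RHS]eq_bigr do rewrite mulrBl.
  rewrite sumrB -mulr_sumr; set S := \sum_k qform (logm X) (u k).
  set T := \sum_k eigval rho k * qform (logm X) (u k).
  (* Opaque atoms keep [ring] from unfolding [logm] when comparing them. *)
  by clearbody S T; ring.
- apply: (@convex_on_pd_sub_qform_logm _ _ _ c
    (fun k => eigval rho k - lambda_min rho) u).
    by move=> k; rewrite subr_ge0; apply: bigmin_le.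
  move=> X pX; rewrite entropyE (neglogdetE rho pX).
  under [in RHS]eq_bigr do rewrite mulrBl.
  rewrite sumrB -mulr_sumr; set S := \sum_k qform (logm X) (u k).
  set T := \sum_k eigval rho k * qform (logm X) (u k).
  by clearbody S T; ring.
Qed.
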